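(* Let $n\ge 1$ and let $A$ be a distributive meet-complemented lattice in which $\Box x$ and $\Diamond x$ exist for every $x\in A$ and such that $\Box^{n+1}a=\Box^n a$ for all $a\in A$. Then for every $a\in A$ the set $\{b\in A: b\le a \text{ and } b\vee\neg b=1\}$ has a maximum $Ba$, and $Ba=\Box^n a$.
   Context: A meet-complemented lattice is a lattice $(L,\le)$ such that for every $a\in L$ the element $\neg a=\max\{b\in L: a\wedge b\le c\ \text{for all } c\in L\}$ exists; it is bounded with bottom $0$ and top $1$. For $a\in L$, $\Box a=\max\{b\in L: a\vee\neg b=1\}$ and $\Diamond a=\min\{b\in L: \neg a\vee b=1\}$; $\Box^n$ is the $n$-fold composite of $\Box$. $Ba$ denotes the greatest Boolean element (element $b$ with $b\vee\neg b=1$) below $a$. *)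

From mathcomp Require Import all_boot all_order.
Set Implicit Arguments. Unset Strict Implicit. Unset Printing Implicit Defensive.
Import Order.TTheory.
Local Open Scope order_scope.

Definition is_max {d : Order.disp_t} {T : porderType d} (P : T -> Prop) (m : T) : Prop :=
  P m /\ (forall b, P b -> b <= m).

Definition is_min {d : Order.disp_t} {T : porderType d} (P : T -> Prop) (m : T) : Prop :=
  P m /\ (forall b, P b -> m <= b).

Definition is_meet_compl {d : Order.disp_t} {T : latticeType d} (neg : T -> T) : Prop :=
  forall a, is_max (fun b => forall c, a `&` b <= c) (neg a).

Definition is_box {d : Order.disp_t} {T : tbLatticeType d} (neg box : T -> T) : Prop :=
  forall a, is_max (fun b => a `|` neg b = \top) (box a).

Definition is_dia {d : Order.disp_t} {T : tbLatticeType d} (neg dia : T -> T) : Prop :=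
  forall a, is_min (fun b => neg a `|` b = \top) (dia a).

From mathcomp Require Import all_boot all_order.
Import Order.TTheory.
Local Open Scope order_scope.

(* Every Boolean b below a satisfies a `|` neg b >= b `|` neg b = 1, so b <= box a;
   iterating, b <= box^k a for all k.  Conversely box a <= a by distributivity,
   and stability box^(n+1) a = box^n a turns the defining property
   box^n a `|` neg (box^(n+1) a) = 1 into Booleanness of box^n a. *)

Section BoxLattice.

Variables (d : Order.disp_t) (T : tbLatticeType d) (neg box : T -> T).
Hypothesis Hbox : is_box neg box.

Definition boolean (b : T) : Prop := b `|` neg b = \top.

Lemma boolean_le_box (a b : T) : boolean b -> b <= a -> b <= box a.
Proof.
move=> bb ba; apply: (Hbox a).2; apply/eqP.
by rewrite eq_le lex1 -bb leU2.
Qed.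

Lemma boolean_le_iter_box (k : nat) (a b : T) :
  boolean b -> b <= a -> b <= iter k box a.
Proof. by move=> bb ba; elim: k => [|k IH] //=; exact: boolean_le_box. Qed.

Lemma boolean_iter_box_stable (k : nat) (a : T) :
  iter k.+1 box a = iter k box a -> boolean (iter k box a).
Proof. by move=> stab; rewrite /boolean -[in neg _]stab; exact: (Hbox _).1. Qed.

End BoxLattice.

Section BoxDistrLattice.

Variables (d : Order.disp_t) (T : tbDistrLatticeType d) (neg box : T -> T).
Hypotheses (Hneg : is_meet_compl neg) (Hbox : is_box neg box).

Lemma meet_neg (x : T) : x `&` neg x = \bot.
Proof. by apply/eqP; rewrite -lex0; exact: (Hneg x).1. Qed.

Lemma box_le (x : T) : box x <= x.
Proof.
have top_eq : x `|` neg (box x) = \top := (Hbox x).1.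
have -> : box x = box x `&` x.
  by rewrite -[in LHS](meetx1 (box x)) -top_eq meetUr meet_neg joinx0.
exact: leIr.
Qed.

Lemma iter_box_le (k : nat) (x : T) : iter k box x <= x.
Proof. by elim: k => [|k IH] //=; exact: le_trans (box_le _) IH. Qed.

End BoxDistrLattice.

Theorem proposition25 (d : Order.disp_t) (T : tbDistrLatticeType d) (n : nat)
  (hn : (1 <= n)%N) (neg box dia : T -> T)
  (Hneg : is_meet_compl neg) (Hbox : is_box neg box) (Hdia : is_dia neg dia)
  (Hstab : forall a : T, iter n.+1 box a = iter n box a) :
  forall a : T,
    is_max (fun b => b <= a /\ b `|` neg b = \top) (iter n box a).
Proof.
move=> a; split; [split|].
- exact: iter_box_le Hneg Hbox n a.
- exact: boolean_iter_box_stable Hbox n a (Hstab a).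
- by move=> b [ba bb]; exact: boolean_le_iter_box.
Qed.
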